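(* Let $\Sigma$ be a finite alphabet and let $C \subseteq \Sigma^n$ be a code with $|C|\ge 2$ and minimum Levenshtein distance $d$. Let $t_\mathsf{I}$ and $t_\mathsf{D}\le n$ be non-negative integers, let $N$ be a positive integer with $n - t_\mathsf{D} \le N \le n + t_\mathsf{I}$, let $v \in \Sigma^N$, and let $\ell = |B_\mathsf{L}(v, t_\mathsf{D}, t_\mathsf{I}) \cap C|$. If $$\left(n - \frac{d}{2}\right) t_\mathsf{I} < \left(\frac{d}{2} - t_\mathsf{D}\right)(n-t_\mathsf{D})$$ (equivalently, when $d<2n$, $t_\mathsf{I} < \frac{(d/2 - t_\mathsf{D})(n-t_\mathsf{D})}{n - d/2}$), then $$\ell \leq \frac{(d/2)(n+t_\mathsf{I})}{(d/2-t_\mathsf{D})(n-t_\mathsf{D})-(n-d/2)t_\mathsf{I}}.$$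
   Context: For words $x,y$ over $\Sigma$ (possibly of different lengths), the Levenshtein distance $d_\mathsf{L}(x,y)$ is the minimum number of single-symbol insertions and deletions needed to transform $x$ into $y$. The minimum Levenshtein distance of a code $C$ is $\min\{d_\mathsf{L}(c_1,c_2): c_1\neq c_2 \in C\}$. For a word $v$ and non-negative integers $a,b$, $B_\mathsf{L}(v,a,b)$ denotes the set of all words obtainable from $v$ by at most $a$ insertions and at most $b$ deletions. *)

From HB Require Import structures.
From mathcomp Require Import all_boot all_order all_algebra.
Set Implicit Arguments. Unset Strict Implicit. Unset Printing Implicit Defensive.

Section Lev.
Variable S : finType.

Definition inserts (x : seq S) : seq (seq S) :=
  [seq take i x ++ s :: drop i x | i <- iota 0 (size x).+1, s <- enum S].

Definition deletes (x : seq S) : seq (seq S) :=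
  [seq take i x ++ drop i.+1 x | i <- iota 0 (size x)].

Fixpoint reach_fuel (f a b : nat) (x y : seq S) : bool :=
  (x == y) ||
  match f with
  | 0 => false
  | f'.+1 =>
      ((0 < a) && has (fun z => reach_fuel f' a.-1 b z y) (inserts x)) ||
      ((0 < b) && has (fun z => reach_fuel f' a b.-1 z y) (deletes x))
  end.

(* y is obtainable from x by at most a insertions and at most b deletions,
   i.e. y \in B_L(x, a, b). *)
Definition reach (a b : nat) (x y : seq S) : bool := reach_fuel (a + b) a b x y.

Definition lev_dist_is (x y : seq S) (k : nat) : Prop :=
  (exists a b, a + b = k /\ reach a b x y) /\
  (forall a b, reach a b x y -> k <= a + b).

Definition min_lev_dist_is (n : nat) (C : {set n.-tuple S}) (d : nat) : Prop :=
  (exists c1 c2, [/\ c1 \in C, c2 \in C, c1 != c2 & lev_dist_is c1 c2 d]) /\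
  (forall c1 c2 k, c1 \in C -> c2 \in C -> c1 != c2 -> lev_dist_is c1 c2 k -> d <= k).

End Lev.

(* A word c of length n in B_L(v, t_D, t_I) keeps a set X_c of positions of v, with
   n <= |X_c| + t_D and N <= |X_c| + t_I, the subword of v on X_c being a subsequence of c.
   For distinct codewords c, c' the subword on X_c :&: X_c' is a common subsequence,
   so d <= d_L(c, c') <= 2 (n - |X_c :&: X_c'|): pairwise overlaps are at most n - d/2.
   Counting, for each position j of v, the codewords keeping j and applying Cauchy-Schwarz
   gives (sum_c |X_c|)^2 <= N * sum_(c, c') |X_c :&: X_c'|, and this Johnson-type second
   moment inequality, together with the size bounds on the X_c, bounds their number. *)

From HB Require Import structures.
From mathcomp Require Import all_boot all_order all_algebra.
From mathcomp Require Import zify ring lra.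
Import Order.TTheory GRing.Theory Num.Theory.
Set Implicit Arguments. Unset Strict Implicit. Unset Printing Implicit Defensive.

Section EditScripts.
Variable S : finType.
Implicit Types x y z w : seq S.

Lemma mem_inserts x z :
  reflect (exists i s, i <= size x /\ z = take i x ++ s :: drop i x) (z \in inserts x).
Proof.
apply: (iffP allpairsP) => [[[i s] [Hi _ ->]]|[i [s [Hi ->]]]].
  by exists i, s; split=> //; move: Hi; rewrite mem_iota /=; lia.
by exists (i, s); split=> //; [rewrite mem_iota /=; lia | rewrite mem_enum].
Qed.

Lemma mem_deletes x z :
  reflect (exists i, i < size x /\ z = take i x ++ drop i.+1 x) (z \in deletes x).
Proof.
apply: (iffP mapP) => [[i Hi ->]|[i [Hi ->]]].
  by exists i; split=> //; move: Hi; rewrite mem_iota /=; lia.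
by exists i => //; rewrite mem_iota; lia.
Qed.

Lemma reach_fuelS f a b x y : reach_fuel f.+1 a b x y =
  [|| x == y, (0 < a) && has (fun z => reach_fuel f a.-1 b z y) (inserts x)
    | (0 < b) && has (fun z => reach_fuel f a b.-1 z y) (deletes x)].
Proof. by []. Qed.

Lemma reach_fuelW f a b f' a' b' x y : f <= f' -> a <= a' -> b <= b' ->
  reach_fuel f a b x y -> reach_fuel f' a' b' x y.
Proof.
elim: f f' a b a' b' x => [|f IH] f' a b a' b' x Hf Ha Hb.
  by rewrite /= orbF => /eqP ->; case: f' {Hf} => /=; rewrite eqxx.
case: f' Hf => // f' Hf; rewrite !reach_fuelS.
case/or3P=> [/eqP ->|/andP [Ha0 /hasP [z Hz Hr]]|/andP [Hb0 /hasP [z Hz Hr]]].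
- by rewrite eqxx.
- apply/or3P; apply: Or32; rewrite (leq_trans Ha0 Ha); apply/hasP; exists z => //.
  by apply: IH Hr; lia.
- apply/or3P; apply: Or33; rewrite (leq_trans Hb0 Hb); apply/hasP; exists z => //.
  by apply: IH Hr; lia.
Qed.

Lemma reach_fuel_cons c f a b x y :
  reach_fuel f a b x y -> reach_fuel f a b (c :: x) (c :: y).
Proof.
elim: f a b x => [|f IH] a b x; first by rewrite /= !orbF => /eqP ->.
rewrite !reach_fuelS => /or3P [/eqP ->|/andP [Ha /hasP [z Hz Hr]]|/andP [Hb /hasP [z Hz Hr]]].
- by rewrite eqxx.
- apply/or3P; apply: Or32; rewrite Ha; apply/hasP; exists (c :: z); last exact: IH.
  by case/mem_inserts: Hz => i [s [Hi ->]]; apply/mem_inserts; exists i.+1, s.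
- apply/or3P; apply: Or33; rewrite Hb; apply/hasP; exists (c :: z); last exact: IH.
  by case/mem_deletes: Hz => i [Hi ->]; apply/mem_deletes; exists i.+1.
Qed.

Lemma reach_fuel_delete_head c f a b x y :
  reach_fuel f a b x y -> reach_fuel f.+1 a b.+1 (c :: x) y.
Proof.
move=> H; rewrite reach_fuelS; apply/or3P; apply: Or33; apply/hasP; exists x => //.
by apply/mem_deletes; exists 0; rewrite take0 drop1.
Qed.

Lemma reach_fuel_insert_head c f a b x y :
  reach_fuel f a b (c :: x) y -> reach_fuel f.+1 a.+1 b x y.
Proof.
move=> H; rewrite reach_fuelS; apply/or3P; apply: Or32; apply/hasP; exists (c :: x) => //.
by apply/mem_inserts; exists 0, c; rewrite take0 drop0.
Qed.

Lemma subseq_reach_fuel_deletes x w : subseq w x ->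
  reach_fuel (size x - size w) 0 (size x - size w) x w.
Proof.
elim: x w => [|c x IH] [|e w] //=; rewrite ?eqxx //.
  by move=> _; have := IH [::] (sub0seq x); rewrite !subn0 => /(reach_fuel_delete_head c).
case: eqP => [-> Hs|_ Hs]; first by rewrite subSS; apply/reach_fuel_cons/IH.
have := size_subseq Hs; rewrite /= => Hsz.
rewrite (_ : _ - _ = (size x - (size w).+1).+1); last lia.
exact: reach_fuel_delete_head (IH _ Hs).
Qed.

Lemma subseq_reach_fuel_inserts y w : subseq w y ->
  reach_fuel (size y - size w) (size y - size w) 0 w y.
Proof.
elim: y w => [|c y IH] [|e w] //=; rewrite ?eqxx //.
  move=> _; have := IH [::] (sub0seq y); rewrite !subn0.
  by move/(reach_fuel_cons c)/reach_fuel_insert_head.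
case: eqP => [-> Hs|_ Hs]; first by rewrite subSS; apply/reach_fuel_cons/IH.
have := size_subseq Hs; rewrite /= => Hsz.
rewrite (_ : _ - _ = (size y - (size w).+1).+1); last lia.
by have := IH _ Hs => /(reach_fuel_cons c)/reach_fuel_insert_head.
Qed.

Lemma reach_fuel_cat f1 f2 a b x w y : reach_fuel f1 0 b x w -> reach_fuel f2 a 0 w y ->
  reach_fuel (f1 + f2) a b x y.
Proof.
elim: f1 b x => [|f1 IH] b x.
  by rewrite /= orbF => /eqP -> /(reach_fuelW _ _ _); apply.
rewrite reach_fuelS => /or3P [/eqP -> H2|/andP [//]|/andP [Hb /hasP [z Hz Hr]] H2].
  by apply: reach_fuelW H2; lia.
rewrite addSn reach_fuelS; apply/or3P; apply: Or33; rewrite Hb.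
by apply/hasP; exists z => //; apply: IH Hr H2.
Qed.

Lemma reach_common_subseq n x y w : size x = n -> size y = n ->
  subseq w x -> subseq w y -> reach (n - size w) (n - size w) x y.
Proof.
move=> <- Hy /subseq_reach_fuel_deletes Hx /subseq_reach_fuel_inserts.
rewrite Hy => /(reach_fuel_cat Hx); exact: reach_fuelW.
Qed.

Lemma reach_lev_dist a b x y : reach a b x y -> exists2 k, lev_dist_is x y k & k <= a + b.
Proof.
have reach_split a' b' : reach a' b' x y ->
    [exists i : 'I_(a' + b').+1, reach i (a' + b' - i) x y].
  move=> H; apply/existsP; exists (@Ordinal (a' + b').+1 a' (leq_addr b' a')).
  by rewrite /= addKn.
move=> /reach_split Hab.
pose within k := [exists i : 'I_k.+1, reach i (k - i) x y].
have [k /existsP [i Hi] Hmin] := ex_minnP (ex_intro within _ Hab).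
exists k; last exact: Hmin.
split=> [|a' b' /reach_split]; last exact: Hmin.
by exists i, (k - i); split=> //; have := ltn_ord i; lia.
Qed.

Lemma subseq_mask_insert (m : bitseq) i s x : i <= size x -> size m = (size x).+1 ->
  subseq (mask (take i m ++ drop i.+1 m) x) (mask m (take i x ++ s :: drop i x)).
Proof.
move=> Hi Hm; have Him : i < size m by rewrite Hm.
have Htake : size (take i m) = size (take i x) by rewrite !size_takel // Hm ltnW.
have -> : mask m (take i x ++ s :: drop i x) =
    mask (take i m) (take i x) ++ mask (nth false m i :: drop i.+1 m) (s :: drop i x).
  by rewrite -mask_cat // -drop_nth // cat_take_drop.
rewrite -{1}(cat_take_drop i x) mask_cat //.
by apply: cat_subseq => //; case: nth => /=; [apply: subseq_cons | apply: subseq_refl].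
Qed.

Lemma mask_delete (m : bitseq) i x : i < size x -> size m = (size x).-1 ->
  mask (take i m ++ false :: drop i m) x = mask m (take i x ++ drop i.+1 x).
Proof.
move=> Hi Hm; have Him : i <= size m by rewrite Hm; lia.
have Htake : size (take i m) = size (take i x) by rewrite !size_takel // ltnW.
case: x Hi Hm Htake => // c x' Hi _ Htake.
rewrite -{1}(cat_take_drop i (c :: x')) (drop_nth c Hi) !mask_cat //=.
by rewrite -mask_cat // cat_take_drop.
Qed.

Lemma reach_fuel_mask f a b x y : reach_fuel f a b x y ->
  exists m : bitseq, [/\ size m = size x, subseq (mask m x) y,
    size x <= count id m + b & size y <= count id m + a].
Proof.
have mask_id a' b' : exists m : bitseq, [/\ size m = size y, subseq (mask m y) y,
    size y <= count id m + b' & size y <= count id m + a'].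
  exists (nseq (size y) true); rewrite size_nseq mask_true ?size_nseq // count_nseq mul1n.
  by split=> //; apply: leq_addr.
elim: f a b x => [|f IH] a b x; first by rewrite /= orbF => /eqP ->.
rewrite reach_fuelS.
case/or3P=> [/eqP -> //|/andP [Ha /hasP [z Hz Hr]]|/andP [Hb /hasP [z Hz Hr]]].
- case/mem_inserts: Hz Hr => i [s [Hi ->]] /IH [m [Hm Hsub Hx Hy]].
  have Hsz : size m = (size x).+1.
    by rewrite Hm size_cat /= addnS -size_cat cat_take_drop.
  have Him : i < size m by rewrite Hsz.
  have Hcount : count id m = count id (take i m ++ drop i.+1 m) + nth false m i.
    by rewrite -{1}(cat_take_drop i m) (drop_nth false Him) !count_cat /=; lia.
  exists (take i m ++ drop i.+1 m); split.
  + by rewrite size_cat size_take size_drop Him; lia.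
  + exact: subseq_trans (subseq_mask_insert s Hi Hsz) Hsub.
  + by move: Hx; rewrite -Hm Hsz Hcount; case: nth => /=; lia.
  + by move: Hy; rewrite Hcount; case: nth => /=; lia.
- case/mem_deletes: Hz Hr => i [Hi ->] /IH [m [Hm Hsub Hx Hy]].
  have Hsz : size m = (size x).-1.
    by rewrite Hm size_cat size_take size_drop Hi; lia.
  exists (take i m ++ false :: drop i m); rewrite mask_delete // count_cat /=.
  rewrite -count_cat cat_take_drop; split=> //.
  + by rewrite size_cat /= addnS -size_cat cat_take_drop Hsz; lia.
  + by move: Hx; rewrite size_cat size_take size_drop Hi; lia.
Qed.

End EditScripts.

Section Subwords.
Variables (S : finType) (N : nat) (v : N.-tuple S).
Implicit Types X Y : {set 'I_N}.

Definition subword (X : {set 'I_N}) : seq S := [seq tnth v j | j <- enum X].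

Lemma size_subword X : size (subword X) = #|X|.
Proof. by rewrite size_map cardE. Qed.

Lemma subword_subset X Y : X \subset Y -> subseq (subword X) (subword Y).
Proof.
move=> /subsetP sXY; apply: map_subseq; rewrite /enum_mem.
have -> : filter (mem X) (Finite.enum 'I_N) =
    filter (mem X) (filter (mem Y) (Finite.enum 'I_N)).
  by rewrite -filter_predI; apply: eq_filter => j /=; case: (boolP (j \in X)) => // /sXY ->.
exact: filter_subseq.
Qed.

Lemma mask_subword (m : bitseq) : mask m v = subword [set j : 'I_N | nth false m j].
Proof.
rewrite -{1}(map_tnth_enum v) -map_mask mask_enum_ord /subword /enum_mem.
congr map.
by rewrite -filter_predI; apply: eq_filter => j /=; rewrite in_set andbT.
Qed.

Lemma reach_subword a b (c : seq S) : reach a b v c ->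
  exists X, [/\ subseq (subword X) c, N <= #|X| + b & size c <= #|X| + a].
Proof.
case/reach_fuel_mask=> m [Hm Hsub Hv Hc]; exists [set j : 'I_N | nth false m j].
have -> : #|[set j : 'I_N | nth false m j]| = count id m.
  by rewrite -size_subword -mask_subword size_mask // size_tuple.
by rewrite -mask_subword -[X in X <= _](size_tuple v).
Qed.

End Subwords.

Lemma min_lev_dist_common_subseq (S : finType) n (C : {set n.-tuple S}) d
    (c c' : n.-tuple S) (w : seq S) :
  min_lev_dist_is C d -> c \in C -> c' \in C -> c != c' ->
  subseq w c -> subseq w c' -> d + 2 * size w <= 2 * n.
Proof.
move=> [_ dmin] Hc Hc' Hcc' Hw Hw'.
have [k Hk Hkn] := reach_lev_dist (reach_common_subseq (size_tuple c) (size_tuple c') Hw Hw').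
have := size_subseq Hw; rewrite size_tuple; set m := size w in Hkn *.
by have := dmin _ _ _ Hc Hc' Hcc' Hk; lia.
Qed.

Lemma min_lev_dist_le (S : finType) n (C : {set n.-tuple S}) d :
  min_lev_dist_is C d -> d <= n + n.
Proof.
move=> dmin; case: (dmin) => [[c [c' [Hc Hc' Hcc' _]]] _].
by have := min_lev_dist_common_subseq dmin Hc Hc' Hcc' (sub0seq _) (sub0seq _); lia.
Qed.

Lemma card_set_sum (T : finType) (B : {set T}) : #|B| = \sum_x (x \in B).
Proof. by rewrite -sum1_card big_mkcond. Qed.

Section Incidence.
Variables (I : finType) (A : {set I}) (N : nat) (X : I -> {set 'I_N}).

Lemma card_incidence j : #|[set c in A | j \in X c]| = \sum_(c in A) (j \in X c).
Proof.
by rewrite card_set_sum [RHS]big_mkcond; apply: eq_bigr => c _; rewrite inE; case: (c \in A).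
Qed.

Lemma sum_card_incidence : \sum_j #|[set c in A | j \in X c]| = \sum_(c in A) #|X c|.
Proof.
under eq_bigr do rewrite card_incidence.
by rewrite exchange_big; apply: eq_bigr => c _; rewrite card_set_sum.
Qed.

Lemma sum_sqr_card_incidence :
  \sum_j #|[set c in A | j \in X c]| ^ 2 = \sum_(c in A) \sum_(c' in A) #|X c :&: X c'|.
Proof.
under eq_bigr do rewrite card_incidence expnS expn1 big_distrlr.
rewrite exchange_big; apply: eq_bigr => c _; rewrite exchange_big; apply: eq_bigr => c' _.
by rewrite card_set_sum; apply: eq_bigr => j _; rewrite inE /= mulnb.
Qed.

End Incidence.

Section JohnsonBound.
Local Open Scope ring_scope.
Variable R : realDomainType.

Lemma sqr_sum_le (N : nat) (x : 'I_N -> R) : (\sum_j x j) ^+ 2 <= N%:R * \sum_j x j ^+ 2.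
Proof.
case: N x => [|N] x; first by rewrite !big_ord0 expr0n mul0r.
set M := \sum_j x j.
have : 0 <= \sum_j (N.+1%:R * x j - M) ^+ 2 by apply: sumr_ge0 => j _; apply: sqr_ge0.
have -> : \sum_j (N.+1%:R * x j - M) ^+ 2 =
    N.+1%:R * (N.+1%:R * \sum_j x j ^+ 2 - M ^+ 2).
  under eq_bigr do rewrite sqrrB exprMn.
  rewrite !big_split /= sumrN sumr_const card_ord sumrMnl.
  by rewrite -mulr_sumr -!mulr_suml -mulr_sumr -/M; ring.
by rewrite pmulr_rge0 ?ltr0Sn // subr_ge0.
Qed.

Lemma johnson_inequality (l M N n s L tI : R) :
  M ^+ 2 <= N * (M + l * (l - 1) * L) ->
  l * s <= M -> M <= l * n -> N * l <= M + l * tI ->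
  0 <= s -> 0 <= L -> L <= n -> 0 <= tI -> 0 <= N -> N <= n + tI -> 0 <= l ->
  L * tI < (s - L) * s ->
  l * ((s - L) * s - L * tI) <= (n - L) * (n + tI).
Proof.
move=> Hsec Hs Hn HN s0 L0 Ln tI0 N0 Nn l0 Hgap.
have sL : L < s by rewrite ltNge; apply/negP => Hsle; nra.
have E1 : M ^+ 2 - l * L * (M + l * tI) <= N * (M - l * L).
  have := ler_wpM2l (mulr_ge0 l0 L0) HN; nra.
have E2 : l ^+ 2 * ((s - L) * s - L * tI) <= M ^+ 2 - l * L * (M + l * tI).
  have : 0 <= (M - l * s) * (M + l * s - l * L) by apply: mulr_ge0; nra.
  nra.
have E3 : N * (M - l * L) <= l * ((n - L) * (n + tI)) by nra.
have [->|lpos] := eqVneq l 0; first by rewrite mul0r; apply: mulr_ge0; lra.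
have lp : 0 < l by rewrite lt_def lpos l0.
by rewrite -(ler_pM2l lp); nra.
Qed.

Variables (I : finType) (A : {set I}) (N : nat) (X : I -> {set 'I_N}) (L : R).
Hypothesis overlap_le : forall c c', c \in A -> c' \in A -> c != c' ->
  #|X c :&: X c'|%:R <= L.

Lemma johnson_second_moment :
  (\sum_(c in A) #|X c|%:R) ^+ 2 <=
    N%:R * (\sum_(c in A) #|X c|%:R + #|A|%:R * (#|A|%:R - 1) * L).
Proof.
have := sqr_sum_le (fun j => #|[set c in A | j \in X c]|%:R).
rewrite -natr_sum sum_card_incidence natr_sum.
under [X in _ <= _ * X]eq_bigr do rewrite -natrX.
rewrite -[X in _ <= _ * X]natr_sum sum_sqr_card_incidence natr_sum => /le_trans; apply.
apply: ler_wpM2l => //; rewrite -mulrA mulr_natl -sumr_const -big_split /=.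
apply: ler_sum => c Hc; rewrite natr_sum (bigD1 c Hc) /= setIid lerD2l.
rewrite (cardD1x Hc) natrD addrAC subrr add0r mulrC mulr_natr -sumr_const.
by apply: ler_sum => c' /andP [Hc' Hcc']; apply: overlap_le; rewrite // eq_sym.
Qed.

Lemma card_le_johnson (n s tI : R) :
  (forall c, c \in A -> [/\ s <= #|X c|%:R, #|X c|%:R <= n & N%:R <= #|X c|%:R + tI]) ->
  0 <= s -> 0 <= L -> L <= n -> 0 <= tI -> N%:R <= n + tI -> L * tI < (s - L) * s ->
  #|A|%:R * ((s - L) * s - L * tI) <= (n - L) * (n + tI).
Proof.
move=> weight_bounds s0 L0 Ln tI0 Nn gap.
apply: (johnson_inequality johnson_second_moment) => //.
- by rewrite mulr_natl -sumr_const; apply: ler_sum => c /weight_bounds [].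
- by rewrite mulr_natl -sumr_const; apply: ler_sum => c /weight_bounds [].
- rewrite mulr_natr mulr_natl -!sumr_const -big_split /=.
  by apply: ler_sum => c /weight_bounds [].
Qed.

End JohnsonBound.

Section KeptPositions.
Variables (S : finType) (n N tD tI : nat) (v : N.-tuple S).

Definition kept_spec (c : n.-tuple S) (X : {set 'I_N}) :=
  [&& subseq (subword v X) c, N <= #|X| + tI & n <= #|X| + tD].

(* A set of positions of [v] surviving in [c]; the default [set0] is only taken when
   [c] is not reachable from [v]. *)
Definition kept_positions (c : n.-tuple S) := odflt set0 [pick X | kept_spec c X].

Lemma kept_positionsP (c : n.-tuple S) : reach tD tI v c -> kept_spec c (kept_positions c).
Proof.
case/reach_subword=> X [sub_c HN Hn]; rewrite size_tuple in Hn.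
by rewrite /kept_positions; case: pickP => // /(_ X); rewrite /kept_spec sub_c HN Hn.
Qed.

Lemma card_kept_positions_le (c : n.-tuple S) : reach tD tI v c -> #|kept_positions c| <= n.
Proof.
case/kept_positionsP/and3P=> sub_c _ _.
by rewrite -(size_subword v) -(size_tuple c) size_subseq.
Qed.

Lemma min_lev_dist_kept_positions (C : {set n.-tuple S}) d (c c' : n.-tuple S) :
  min_lev_dist_is C d -> c \in C -> c' \in C -> c != c' ->
  reach tD tI v c -> reach tD tI v c' ->
  d + 2 * #|kept_positions c :&: kept_positions c'| <= 2 * n.
Proof.
move=> dmin Hc Hc' Hcc' /kept_positionsP/and3P [sub_c _ _] /kept_positionsP/and3P [sub_c' _ _].
rewrite -(size_subword v); apply: (min_lev_dist_common_subseq dmin Hc Hc' Hcc').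
- exact: subseq_trans (subword_subset _ (subsetIl _ _)) sub_c.
- exact: subseq_trans (subword_subset _ (subsetIr _ _)) sub_c'.
Qed.

End KeptPositions.

Local Open Scope ring_scope.

Theorem mainTheorem2 (S : finType) (n : nat) (C : {set n.-tuple S}) (d tI tD N : nat)
  (v : N.-tuple S) :
  (2 <= #|C|)%N ->
  min_lev_dist_is C d ->
  (tD <= n)%N ->
  (0 < N)%N ->
  (n - tD <= N)%N -> (N <= n + tI)%N ->
  ((n%:Q - d%:Q / 2) * tI%:Q < (d%:Q / 2 - tD%:Q) * (n%:Q - tD%:Q)) ->
  (#|[set c in C | reach tD tI v c]|)%:Q <=
    (d%:Q / 2) * (n%:Q + tI%:Q) /
    ((d%:Q / 2 - tD%:Q) * (n%:Q - tD%:Q) - (n%:Q - d%:Q / 2) * tI%:Q).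
Proof.
move=> _ dmin tDn _ _ NntI gap; have dn := min_lev_dist_le dmin.
have natQ (k : nat) : k%:Q = k%:R :> rat by [].
rewrite !natQ in gap *; rewrite ler_pdivlMr ?subr_gt0 //.
set L : rat := n%:R - d%:R / 2 in gap *.
have E : d%:R / 2 - tD%:R = n%:R - tD%:R - L by rewrite /L; ring.
rewrite E in gap *.
have -> : d%:R / 2 = n%:R - L :> rat by rewrite /L; ring.
apply: (card_le_johnson (X := @kept_positions S n N tD tI v)); rewrite /L.
- move=> c c' /setIdP [Hc reach_c] /setIdP [Hc' reach_c'] Hcc'.
  have := min_lev_dist_kept_positions dmin Hc Hc' Hcc' reach_c reach_c'.
  by rewrite -(ler_nat rat) natrD !natrM => ?; lra.
- move=> c /setIdP [_ reach_c]; have := card_kept_positions_le reach_c.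
  case/kept_positionsP/and3P: reach_c => _ HN Hn.
  by move: HN Hn; rewrite -!(ler_nat rat) !natrD => HN Hn Hc; split=> //; lra.
- by rewrite subr_ge0 ler_nat.
- by rewrite subr_ge0 ler_pdivrMr // -natrM ler_nat; lia.
- by have := ler0n rat d; lra.
- exact: ler0n.
- by rewrite -natrD ler_nat.
- exact: gap.
Qed.
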